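(* For a fixed $x\in(0,1)$, the function $g(k)=(\cos kx+\sin kx)^{1/k}$ is decreasing on $(0,1)$. *)

From Stdlib Require Import Reals.
Open Scope R_scope.
Definition g (x k : R) : R := Rpower (cos (k * x) + sin (k * x)) (1 / k).

(** Since (cos t + sin t)^2 = 1 + sin 2t, we have ln g(k) = x q(2kx) with
    q(u) = ln(1 + sin u) / u, so it suffices that q decreases on (0, 2).
    The derivative of q is F(u)/u^2 with F(u) = u cos u/(1 + sin u) - ln(1 + sin u);
    F(0) = 0 and F'(u) = -u/(1 + sin u) < 0, hence F < 0 on (0, PI]. *)

From Stdlib Require Import Reals Lra.
From Coquelicot Require Import Coquelicot.
Open Scope R_scope.

Lemma derive_neg_decreasing (f f' : R -> R) (a b : R) :
  a < b ->
  (forall c, a <= c <= b -> is_derive f c (f' c)) ->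
  (forall c, a < c < b -> f' c < 0) ->
  f b < f a.
Proof.
  intros Hab Hder Hneg.
  destruct (MVT_cor2 f f' a b Hab) as [c [Hmvt Hc]].
  - intros c Hc; apply is_derive_Reals, Hder, Hc.
  - pose proof (Hneg c Hc); nra.
Qed.

Lemma one_plus_sin_pos (u : R) : 0 <= u <= PI -> 0 < 1 + sin u.
Proof.
  intros Hu; pose proof (sin_ge_0 u (proj1 Hu) (proj2 Hu)); lra.
Qed.

Definition ln1sin_div (u : R) : R := ln (1 + sin u) / u.

Definition ln1sin_div_num (u : R) : R := u * cos u / (1 + sin u) - ln (1 + sin u).

Lemma is_derive_ln1sin_div_num (u : R) :
  0 <= u <= PI -> is_derive ln1sin_div_num u (- u / (1 + sin u)).
Proof.
  intros Hu; pose proof (one_plus_sin_pos u Hu).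
  unfold ln1sin_div_num; auto_derive; [lra|].
  assert (Hpyth : cos u ^ 2 = 1 - sin u ^ 2)
    by (pose proof (sin2_cos2 u); unfold Rsqr in *; lra).
  field_simplify; [| lra ..].
  rewrite Hpyth; field; nra.
Qed.

Lemma ln1sin_div_num_neg (u : R) : 0 < u <= PI -> ln1sin_div_num u < 0.
Proof.
  intros Hu.
  assert (Hzero : ln1sin_div_num 0 = 0)
    by (unfold ln1sin_div_num; rewrite sin_0, Rplus_0_r, ln_1; lra).
  rewrite <- Hzero.
  apply (derive_neg_decreasing _ (fun c => - c / (1 + sin c))); [lra| |].
  - intros c Hc; apply is_derive_ln1sin_div_num; lra.
  - intros c Hc; apply Rdiv_neg_pos; [lra | apply one_plus_sin_pos; lra].
Qed.

Lemma is_derive_ln1sin_div (u : R) :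
  0 < u <= PI -> is_derive ln1sin_div u (ln1sin_div_num u / u ^ 2).
Proof.
  intros Hu; pose proof (one_plus_sin_pos u ltac:(lra)).
  unfold ln1sin_div, ln1sin_div_num; auto_derive; [lra|].
  field; lra.
Qed.

Lemma ln1sin_div_decreasing (a b : R) :
  0 < a -> a < b -> b <= PI -> ln1sin_div b < ln1sin_div a.
Proof.
  intros Ha Hab Hb.
  apply (derive_neg_decreasing _ (fun c => ln1sin_div_num c / c ^ 2) a b Hab).
  - intros c Hc; apply is_derive_ln1sin_div; lra.
  - intros c Hc; apply Rdiv_neg_pos;
      [apply ln1sin_div_num_neg; lra | apply pow_lt; lra].
Qed.

Lemma cos_plus_sin_sqr (t : R) : (cos t + sin t) ^ 2 = 1 + sin (2 * t).
Proof.
  rewrite sin_2a; pose proof (sin2_cos2 t); unfold Rsqr in *; nra.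
Qed.

Lemma ln_cos_plus_sin (t : R) :
  0 < t < PI / 2 -> ln (cos t + sin t) = t * ln1sin_div (2 * t).
Proof.
  intros Ht.
  assert (0 < cos t) by (apply cos_gt_0; lra).
  assert (0 < sin t) by (apply sin_gt_0; lra).
  unfold ln1sin_div; rewrite <- cos_plus_sin_sqr.
  rewrite ln_pow by lra; simpl INR; field; lra.
Qed.

Lemma g_exp_ln1sin_div (x k : R) :
  0 < k -> 0 < k * x < PI / 2 -> g x k = exp (x * ln1sin_div (2 * (k * x))).
Proof.
  intros Hk Hkx; unfold g, Rpower.
  rewrite ln_cos_plus_sin by exact Hkx.
  f_equal; field; lra.
Qed.

Theorem lemma4p13 (x : R) (hx0 : 0 < x) (hx1 : x < 1) :
  forall k1 k2 : R, 0 < k1 -> k1 < k2 -> k2 < 1 -> g x k2 < g x k1.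
Proof.
  intros k1 k2 Hk1 Hk12 Hk2.
  pose proof PI2_1.
  rewrite !g_exp_ln1sin_div by (lra || split; nra).
  apply exp_increasing, Rmult_lt_compat_l; [exact hx0|].
  apply ln1sin_div_decreasing; nra.
Qed.
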